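(* Let $b,w,n$ be positive integers. There exists a coupling $(X,Y)$ with $X\sim\mathrm{Pclas}(b,w,n)$ and $Y\sim\mathrm{Beta}(w,b)$ such that almost surely $$|X-nY|<\frac{b(4w+b+1)}{2}.$$
   Context: $\mathrm{Pclas}(b,w,n)$ denotes the distribution of the number of white balls in a classical Pólya urn after $n$ completed draws, starting with $b$ black and $w$ white balls: at each draw a uniformly random ball is drawn and returned together with one additional ball of the same color. $\mathrm{Beta}(a,b)$ has density proportional to $x^{a-1}(1-x)^{b-1}$ on $(0,1)$. *)

From Stdlib Require Import Reals Lra Lia Factorial.
Open Scope R_scope.

(* pclas b w n k = P(X = k), X = number of white balls in a classical Polya
   urn after n completed draws, starting from b black and w white balls.
   After n draws the urn has b + w + n balls; from a state with j white balls
   the next draw is white with probability j / (b + w + n) and then j -> j+1. *)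
Fixpoint pclas (b w n k : nat) : R :=
  match n with
  | O => if Nat.eqb k w then 1 else 0
  | S m =>
      let tot := INR (b + w + m) in
      (match k with
       | O => 0
       | S j => pclas b w m j * INR j / tot
       end)
      + pclas b w m k * (tot - INR k) / tot
  end.

Definition beta_dens (a c : nat) (x : R) : R :=
  x ^ (a - 1) * (1 - x) ^ (c - 1)
  * (INR (Factorial.fact (a + c - 1)) / (INR (Factorial.fact (a - 1)) * INR (Factorial.fact (c - 1)))).

(* A coupling (X,Y) with X ~ Pclas(b,w,n) (values in {0,...,w+n}) and
   Y ~ Beta(w,b), described through the sub-densities
   g k y = density of Y on the event {X = k}. *)
Definition pclas_beta_coupling_with_bound (b w n : nat) (c : R) : Prop :=
  exists g : nat -> R -> R,
    (forall k y, 0 <= g k y) /\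
    (forall k, (k <= w + n)%nat ->
       exists pr : Riemann_integrable (g k) 0 1, RiemannInt pr = pclas b w n k) /\
    (forall y, 0 < y < 1 -> sum_f_R0 (fun k => g k y) (w + n) = beta_dens w b y) /\
    (forall k y, (k <= w + n)%nat -> 0 < y < 1 -> g k y <> 0 ->
       Rabs (INR k - INR n * y) < c).

(* Let F be the Beta(w,b) distribution function; F t = P(Bin(b+w-1, t) >= w).
   Couple Y ~ Beta(w,b) with X by quantiles: X = k exactly when F Y lies between
   P(X < k) and P(X <= k). For the Polya urn, P(X <= k) is the probability that
   b+w-1 draws without replacement from n+b+w-1 balls, k of them marked, contain
   at least w marked balls. Comparing sampling without and with replacement gives
   F((k+1-b-w)/(n+1)) <= P(X < k) and P(X <= k) <= F(k/(n+1)), hence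
   k - b - w <= nY <= k on {X = k}, well within the claimed bound. *)

From Stdlib Require Import Reals Lra Lia Arith.
From Coquelicot Require Import Coquelicot.
Open Scope R_scope.

Lemma sum_f_R0_le_add (p : nat -> R) (k d : nat) :
  (forall i, 0 <= p i) -> sum_f_R0 p k <= sum_f_R0 p (k + d).
Proof.
  intro hp; induction d as [|d IH]; [rewrite Nat.add_0_r; lra|].
  rewrite Nat.add_succ_r, tech5; specialize (hp (S (k + d))); lra.
Qed.

Lemma sum_f_R0_le_total (p : nat -> R) (N k : nat) :
  (forall i, 0 <= p i) -> (forall i, (N < i)%nat -> p i = 0) ->
  sum_f_R0 p k <= sum_f_R0 p N.
Proof.
  intros hp hN; destruct (le_lt_dec k N) as [HkN|HNk].
  - replace N with (k + (N - k))%nat by lia; now apply sum_f_R0_le_add.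
  - replace k with (N + (k - N))%nat by lia.
    induction (k - N)%nat as [|d IH]; [rewrite Nat.add_0_r; lra|].
    rewrite Nat.add_succ_r, tech5, hN by lia; lra.
Qed.

Definition mass_below (p : nat -> R) (k : nat) : R := sum_f_R0 p k - p k.

Lemma mass_below_S p k : mass_below p (S k) = sum_f_R0 p k.
Proof. unfold mass_below. rewrite tech5. ring. Qed.

Lemma mass_below_bounds p N k :
  (forall i, 0 <= p i) -> (forall i, (N < i)%nat -> p i = 0) -> sum_f_R0 p N = 1 ->
  0 <= mass_below p k <= 1.
Proof.
  intros hp hN hsum. destruct k as [|k]; [unfold mass_below; simpl; lra|].
  rewrite mass_below_S. pose proof (cond_pos_sum p k hp).
  pose proof (sum_f_R0_le_total p N k hp hN). lra.
Qed.

Lemma RiemannInt_of_is_RInt (f : R -> R) (a b v : R) :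
  is_RInt f a b v -> exists pr : Riemann_integrable f a b, RiemannInt pr = v.
Proof.
  intro H. exists (ex_RInt_Reals_0 f a b (ex_intro _ v H)).
  rewrite <- RInt_Reals. now apply is_RInt_unique.
Qed.

Section IncreasingOnUnitInterval.

Variables F f : R -> R.
Hypothesis F_derive : forall t, derivable_pt_lim F t (f t).
Hypothesis f_pos : forall t, 0 < t < 1 -> 0 < f t.

Lemma increasing_lt (x y : R) : 0 <= x -> x < y -> y <= 1 -> F x < F y.
Proof.
  intros H0x Hxy Hy1.
  destruct (MVT_cor2 F f x y Hxy (fun c _ => F_derive c)) as [c [Hc Hcxy]].
  assert (0 < f c) by (apply f_pos; lra). nra.
Qed.

Lemma increasing_le (x y : R) : 0 <= x -> x <= y -> y <= 1 -> F x <= F y.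
Proof.
  intros H0x [Hxy|<-] Hy1; [left; now apply increasing_lt | lra].
Qed.

Lemma increasing_le_inv (x y : R) :
  0 <= x <= 1 -> 0 <= y <= 1 -> F x <= F y -> x <= y.
Proof.
  intros Hx Hy HF. destruct (Rle_or_lt x y) as [|Hyx]; [assumption|].
  pose proof (increasing_lt y x ltac:(lra) Hyx ltac:(lra)). lra.
Qed.

End IncreasingOnUnitInterval.

Section QuantileCoupling.

Variables F f : R -> R.
Hypothesis F_derive : forall t, derivable_pt_lim F t (f t).
Hypothesis f_cont : continuity f.
Hypothesis f_nonneg : forall t, 0 <= t <= 1 -> 0 <= f t.
Hypothesis f_pos : forall t, 0 < t < 1 -> 0 < f t.
Hypothesis F_0 : F 0 = 0.
Hypothesis F_1 : F 1 = 1.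

Definition slice (t : nat -> R) (k : nat) (y : R) : R :=
  if Rle_dec (t k) y then if Rlt_dec y (t (S k)) then f y else 0 else 0.

Lemma slice_neq0 t k y : slice t k y <> 0 -> t k <= y < t (S k).
Proof.
  unfold slice; destruct (Rle_dec (t k) y), (Rlt_dec y (t (S k))); auto; lra.
Qed.

Lemma slice_nonneg t k y : 0 <= t k -> t (S k) <= 1 -> 0 <= slice t k y.
Proof.
  intros H0 H1. unfold slice.
  destruct (Rle_dec (t k) y), (Rlt_dec y (t (S k))); try lra. apply f_nonneg; lra.
Qed.

Lemma slice_is_RInt t k : 0 <= t k -> t k <= t (S k) -> t (S k) <= 1 ->
  is_RInt (slice t k) 0 1 (F (t (S k)) - F (t k)).
Proof.
  intros H0 Hk H1.
  assert (Hleft : is_RInt (slice t k) 0 (t k) (scal (t k - 0) zero)).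
  { apply is_RInt_ext with (fun _ => zero); [|apply is_RInt_const].
    intros x Hx. rewrite Rmin_left, Rmax_right in Hx by lra. unfold slice.
    destruct (Rle_dec (t k) x); [lra|reflexivity]. }
  assert (Hright : is_RInt (slice t k) (t (S k)) 1 (scal (1 - t (S k)) zero)).
  { apply is_RInt_ext with (fun _ => zero); [|apply is_RInt_const].
    intros x Hx. rewrite Rmin_left, Rmax_right in Hx by lra. unfold slice.
    destruct (Rle_dec (t k) x), (Rlt_dec x (t (S k))); reflexivity || lra. }
  assert (Hmid : is_RInt (slice t k) (t k) (t (S k)) (minus (F (t (S k))) (F (t k)))).
  { apply is_RInt_ext with f.
    - intros x Hx. rewrite Rmin_left, Rmax_right in Hx by lra. unfold slice.
      destruct (Rle_dec (t k) x), (Rlt_dec x (t (S k))); reflexivity || lra.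
    - apply (is_RInt_derive (V := R_CompleteNormedModule) F f).
      + intros x _. apply is_derive_Reals, F_derive.
      + intros x _. apply continuity_pt_filterlim, f_cont. }
  pose proof (is_RInt_Chasles _ _ _ _ _ _ (is_RInt_Chasles _ _ _ _ _ _ Hleft Hmid) Hright)
    as H.
  rewrite !scal_zero_r, plus_zero_l, plus_zero_r in H. exact H.
Qed.

Lemma slice_sum t y M : (forall k, t k <= t (S k)) ->
  sum_f_R0 (fun k => slice t k y) M =
  if Rle_dec (t O) y then if Rlt_dec y (t (S M)) then f y else 0 else 0.
Proof.
  intro Ht.
  assert (Ht0 : forall i, t O <= t (S i)).
  { intro i; induction i as [|i IH]; [apply Ht | specialize (Ht (S i)); lra]. }
  induction M as [|M IH]; [reflexivity|].
  rewrite tech5, IH. unfold slice. specialize (Ht (S M)). specialize (Ht0 M).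
  destruct (Rle_dec (t O) y), (Rlt_dec y (t (S M))),
    (Rle_dec (t (S M)) y), (Rlt_dec y (t (S (S M)))); lra.
Qed.

Lemma quantiles (G : nat -> R) : (forall k, 0 <= G k <= 1) ->
  {t : nat -> R | forall k, 0 <= t k <= 1 /\ F (t k) = G k}.
Proof.
  intro HG.
  assert (Fcont : continuity F).
  { intro x. apply derivable_continuous_pt. exists (f x). apply F_derive. }
  assert (HG' : forall k, Rmin (F 0) (F 1) <= G k <= Rmax (F 0) (F 1)).
  { intro k. rewrite F_0, F_1, Rmin_left, Rmax_right by lra. apply HG. }
  exists (fun k => proj1_sig (IVT_gen F 0 1 (G k) Fcont (HG' k))).
  intro k. destruct (IVT_gen F 0 1 (G k) Fcont (HG' k)) as [x [Hx HFx]]; simpl.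
  rewrite Rmin_left, Rmax_right in Hx by lra. auto.
Qed.

Theorem quantile_coupling (p : nat -> R) (N : nat) :
  (forall k, 0 <= p k) -> (forall k, (N < k)%nat -> p k = 0) -> sum_f_R0 p N = 1 ->
  exists g : nat -> R -> R,
    (forall k y, 0 <= g k y) /\
    (forall k, exists pr : Riemann_integrable (g k) 0 1, RiemannInt pr = p k) /\
    (forall y, 0 < y < 1 -> sum_f_R0 (fun k => g k y) N = f y) /\
    (forall k y, g k y <> 0 -> mass_below p k <= F y <= sum_f_R0 p k).
Proof.
  intros hp hN hsum.
  set (G := mass_below p).
  assert (HG : forall k, 0 <= G k <= 1) by (intro k; now apply (mass_below_bounds p N)).
  destruct (quantiles G HG) as [t Ht].
  assert (t_le_inv : forall i j, F (t i) <= F (t j) -> t i <= t j).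
  { intros i j. apply (increasing_le_inv F f F_derive f_pos); apply Ht. }
  assert (t_mono : forall k, t k <= t (S k)).
  { intro k. apply t_le_inv. rewrite (proj2 (Ht k)), (proj2 (Ht (S k))).
    unfold G. rewrite mass_below_S. unfold mass_below. specialize (hp k). lra. }
  assert (t_0 : t O = 0).
  { pose proof (Ht O) as [H0 HF]. assert (t O <= 0); [|lra].
    apply (increasing_le_inv F f F_derive f_pos); [lra|lra|].
    rewrite HF, F_0. unfold G, mass_below; simpl; lra. }
  assert (t_N : t (S N) = 1).
  { pose proof (Ht (S N)) as [H1 HF]. assert (1 <= t (S N)); [|lra].
    apply (increasing_le_inv F f F_derive f_pos); [lra|lra|].
    rewrite HF, F_1. unfold G; rewrite mass_below_S, hsum. lra. }
  exists (slice t). split; [|split; [|split]].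
  - intros k y. apply slice_nonneg; apply Ht.
  - intro k. apply RiemannInt_of_is_RInt.
    replace (p k) with (F (t (S k)) - F (t k)).
    + apply slice_is_RInt; [apply Ht | apply t_mono | apply Ht].
    + rewrite (proj2 (Ht k)), (proj2 (Ht (S k))). unfold G. rewrite mass_below_S.
      unfold mass_below. ring.
  - intros y Hy. rewrite slice_sum, t_0, t_N by exact t_mono.
    destruct (Rle_dec 0 y), (Rlt_dec y 1); reflexivity || lra.
  - intros k y Hg. apply slice_neq0 in Hg.
    pose proof (Ht k) as [Hk HFk]. pose proof (Ht (S k)) as [HSk HFSk].
    rewrite <- mass_below_S. fold G. rewrite <- HFSk, <- HFk.
    split; apply (increasing_le F f F_derive f_pos); lra.
Qed.

End QuantileCoupling.

(* [binom_tail p r j] is P(Bin(r, p) >= j) and [hyper_tail r N K j] is the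
   probability that [r] draws without replacement from [N] balls, [K] of them
   marked, produce at least [j] marked balls; both recurse on the first draw. *)
Fixpoint binom_tail (p : R) (r j : nat) : R :=
  match r with
  | O => if Nat.eqb j 0 then 1 else 0
  | S r => p * binom_tail p r (pred j) + (1 - p) * binom_tail p r j
  end.

Fixpoint hyper_tail (r N K j : nat) : R :=
  match r with
  | O => if Nat.eqb j 0 then 1 else 0
  | S r => INR K / INR N * hyper_tail r (pred N) (pred K) (pred j)
           + (1 - INR K / INR N) * hyper_tail r (pred N) K j
  end.

Lemma mix_le (q a a' b b' : R) :
  0 <= q <= 1 -> a <= a' -> b <= b' -> q * a + (1 - q) * b <= q * a' + (1 - q) * b'.
Proof. intros; nra. Qed.

Lemma mix_mono (p q a b : R) :
  p <= q -> b <= a -> p * a + (1 - p) * b <= q * a + (1 - q) * b.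
Proof. intros; nra. Qed.

Lemma binom_tail_0 p r : binom_tail p r 0 = 1.
Proof. induction r as [|r IH]; simpl; [reflexivity | rewrite IH; ring]. Qed.

Lemma binom_tail_gt p r j : (r < j)%nat -> binom_tail p r j = 0.
Proof.
  revert j; induction r as [|r IH]; intros j Hj; simpl.
  - destruct (Nat.eqb_spec j 0); [lia | reflexivity].
  - rewrite !IH by lia. ring.
Qed.

Lemma binom_tail_p0 r j : (0 < j)%nat -> binom_tail 0 r j = 0.
Proof.
  revert j; induction r as [|r IH]; intros j Hj; simpl.
  - destruct (Nat.eqb_spec j 0); [lia | reflexivity].
  - rewrite (IH j) by lia. ring.
Qed.

Lemma binom_tail_p1 r j : (j <= r)%nat -> binom_tail 1 r j = 1.
Proof.
  revert j; induction r as [|r IH]; intros j Hj; simpl.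
  - destruct j; [reflexivity | lia].
  - rewrite IH by lia. ring.
Qed.

Lemma binom_tail_S_le p r j : 0 <= p <= 1 -> binom_tail p r (S j) <= binom_tail p r j.
Proof.
  intro hp; revert j; induction r as [|r IH]; intro j; simpl.
  - destruct (Nat.eqb j 0); lra.
  - assert (H : binom_tail p r j <= binom_tail p r (pred j))
      by (destruct j; simpl; [lra | apply IH]).
    apply mix_le; auto.
Qed.

Lemma binom_tail_pred_ge p r j : 0 <= p <= 1 -> binom_tail p r j <= binom_tail p r (pred j).
Proof. intro hp; destruct j; simpl; [lra | now apply binom_tail_S_le]. Qed.

Lemma binomial_C_0 n : Binomial.C n 0 = 1.
Proof. unfold Binomial.C. rewrite Nat.sub_0_r. simpl. field. apply INR_fact_neq_0. Qed.

Lemma binomial_C_diag n : Binomial.C n n = 1.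
Proof. unfold Binomial.C. rewrite Nat.sub_diag. simpl. field. apply INR_fact_neq_0. Qed.

Lemma binom_tail_sub_S p r j : (j <= r)%nat ->
  binom_tail p r j - binom_tail p r (S j) = Binomial.C r j * p ^ j * (1 - p) ^ (r - j).
Proof.
  revert j; induction r as [|r IH]; intros j Hj.
  - replace j with 0%nat by lia. unfold Binomial.C; simpl. field.
  - replace (binom_tail p (S r) j - binom_tail p (S r) (S j)) with
      (p * (binom_tail p r (pred j) - binom_tail p r j)
       + (1 - p) * (binom_tail p r j - binom_tail p r (S j))) by (simpl; ring).
    destruct j as [|i]; simpl pred.
    + rewrite IH, !binomial_C_0 by lia. rewrite !Nat.sub_0_r. simpl. ring.
    + destruct (Nat.eq_dec i r) as [->|Hir].
      * rewrite IH, !binom_tail_gt, !Nat.sub_diag, !binomial_C_diag by lia. simpl. ring.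
      * rewrite IH, IH, <- pascal by lia.
        replace (S r - S i)%nat with (S (r - S i)) by lia.
        replace (r - i)%nat with (S (r - S i)) by lia. simpl. ring.
Qed.

Lemma derivable_pt_lim_eq (f : R -> R) (x l l' : R) :
  derivable_pt_lim f x l -> l = l' -> derivable_pt_lim f x l'.
Proof. now intros H <-. Qed.

Lemma binom_tail_derive r j p :
  derivable_pt_lim (fun q => binom_tail q r j) p
    match j with
    | O => 0
    | S j => INR r * (binom_tail p (pred r) j - binom_tail p (pred r) (S j))
    end.
Proof.
  revert j; induction r as [|r IH]; intro j.
  - apply derivable_pt_lim_eq with 0; [apply derivable_pt_lim_const | destruct j; simpl; ring].
  - simpl binom_tail.
    eapply derivable_pt_lim_eq.
    { apply (derivable_pt_lim_plus (fun q => q * binom_tail q r (pred j))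
                                   (fun q => (1 - q) * binom_tail q r j)).
      - apply (derivable_pt_lim_mult id); [apply derivable_pt_lim_id | apply IH].
      - apply (derivable_pt_lim_mult (fun q => 1 - q)); [|apply IH].
        apply (derivable_pt_lim_minus (fun _ => 1) id);
          [apply derivable_pt_lim_const | apply derivable_pt_lim_id]. }
    unfold id. destruct j as [|[|i]], r as [|r]; simpl; rewrite ?binom_tail_0; ring.
Qed.

Definition beta_cdf (a c : nat) (t : R) : R := binom_tail t (a + c - 1) a.

Lemma beta_cdf_derive a c t : (0 < a)%nat -> (0 < c)%nat ->
  derivable_pt_lim (beta_cdf a c) t (beta_dens a c t).
Proof.
  intros ha hc. destruct a as [|a]; [lia|]. destruct c as [|c]; [lia|].
  eapply derivable_pt_lim_eq; [apply binom_tail_derive|].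
  replace (S a + S c - 1)%nat with (S (a + c)) by lia. simpl pred.
  rewrite binom_tail_sub_S by lia. unfold beta_dens, Binomial.C.
  replace (S a + S c - 1)%nat with (S (a + c)) by lia.
  replace (a + c - a)%nat with c by lia.
  rewrite !Nat.sub_succ, !Nat.sub_0_r.
  change (fact (S (a + c))) with (S (a + c) * fact (a + c))%nat.
  pose proof (INR_fact_lt_0 a). pose proof (INR_fact_lt_0 c).
  rewrite mult_INR. field. lra.
Qed.

Lemma beta_dens_nonneg a c y : 0 <= y <= 1 -> 0 <= beta_dens a c y.
Proof.
  intro Hy. unfold beta_dens.
  pose proof (INR_fact_lt_0 (a + c - 1)). pose proof (INR_fact_lt_0 (a - 1)).
  pose proof (INR_fact_lt_0 (c - 1)).
  apply Rmult_le_pos; [apply Rmult_le_pos; apply pow_le; lra|].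
  left. apply Rdiv_lt_0_compat; [lra | nra].
Qed.

Lemma beta_dens_pos a c y : 0 < y < 1 -> 0 < beta_dens a c y.
Proof.
  intro Hy. unfold beta_dens.
  pose proof (INR_fact_lt_0 (a + c - 1)). pose proof (INR_fact_lt_0 (a - 1)).
  pose proof (INR_fact_lt_0 (c - 1)).
  apply Rmult_lt_0_compat; [apply Rmult_lt_0_compat; apply pow_lt; lra|].
  apply Rdiv_lt_0_compat; [lra | nra].
Qed.

Lemma beta_dens_continuous a c : continuity (beta_dens a c).
Proof. intro x. unfold beta_dens. reg. Qed.

Lemma beta_cdf_0 a c : (0 < a)%nat -> beta_cdf a c 0 = 0.
Proof. intro ha. now apply binom_tail_p0. Qed.

Lemma beta_cdf_1 a c : (0 < c)%nat -> beta_cdf a c 1 = 1.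
Proof. intro hc. apply binom_tail_p1. lia. Qed.

Lemma INR_pred_ge (K : nat) : INR K - 1 <= INR (pred K).
Proof. destruct K as [|K]; simpl pred; [simpl; lra | rewrite S_INR; lra]. Qed.

(* Each draw without replacement sees a marked fraction [K / N] that stays below
   (here) or above (next lemma) [p], so the tails compare draw by draw; writing
   [N = r + d] makes [d] invariant along the recursion. *)
Lemma hyper_tail_le_binom_tail p d r K j : 0 <= p <= 1 ->
  INR K <= p * INR (S d) -> hyper_tail r (r + d) K j <= binom_tail p r j.
Proof.
  intros hp; revert K j; induction r as [|r IH]; intros K j HK; [simpl; lra|].
  change (S r + d)%nat with (S (r + d)). cbn [hyper_tail binom_tail Nat.pred].
  set (q := INR K / INR (S (r + d))).
  assert (HN : 0 < INR (S (r + d))) by (apply lt_0_INR; lia).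
  assert (Hd : INR (S d) <= INR (S (r + d))) by (apply le_INR; lia).
  assert (Hq0 : 0 <= q) by (apply Rdiv_le_0_compat; [apply pos_INR | exact HN]).
  assert (Hqp : q <= p).
  { unfold q. apply (Rle_div_l _ _ _ HN).
    pose proof (Rmult_le_compat_l p _ _ (proj1 hp) Hd). lra. }
  eapply Rle_trans; [apply mix_le; [lra | apply IH | apply IH] | apply mix_mono].
  - pose proof (INR_pred_ge K). pose proof (le_INR (pred K) K ltac:(lia)). lra.
  - exact HK.
  - exact Hqp.
  - now apply binom_tail_pred_ge.
Qed.

Lemma binom_tail_le_hyper_tail p d r K j : 0 <= p <= 1 -> (K <= r + d)%nat ->
  p * INR (S d) <= INR K - INR r + 1 -> binom_tail p r j <= hyper_tail r (r + d) K j.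
Proof.
  intros hp; revert K j; induction r as [|r IH]; intros K j HKN HK; [simpl; lra|].
  change (S r + d)%nat with (S (r + d)) in *. cbn [hyper_tail binom_tail Nat.pred].
  rewrite (S_INR r) in HK.
  set (q := INR K / INR (S (r + d))).
  assert (HN : 0 < INR (S (r + d))) by (apply lt_0_INR; lia).
  assert (Hq1 : q <= 1) by (apply (Rdiv_le_1 _ _ HN), le_INR; lia).
  assert (Hpq : p <= q).
  { unfold q. apply (Rle_div_r _ _ _ HN).
    replace (INR (S (r + d))) with (INR r + INR (S d)) by (rewrite <- plus_INR; f_equal; lia).
    pose proof (pos_INR r). nra. }
  assert (HA : binom_tail p r (pred j) <= hyper_tail r (r + d) (pred K) (pred j)).
  { apply IH; [lia|]. pose proof (INR_pred_ge K). lra. }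
  eapply Rle_trans; [apply mix_mono; [exact Hpq | now apply binom_tail_pred_ge]|].
  destruct (Nat.eq_dec K (S (r + d))) as [HKmax|HKlt].
  - assert (Hq : q = 1) by (unfold q; rewrite HKmax; field; lra).
    rewrite Hq. lra.
  - apply mix_le; [|exact HA | apply IH; [lia | lra]].
    split; [apply Rdiv_le_0_compat; [apply pos_INR | exact HN] | exact Hq1].
Qed.

Lemma hyper_tail_remove r N K j : (r <= N)%nat ->
  hyper_tail r (S N) K j =
  INR K / INR (S N) * hyper_tail r N (pred K) j
  + (1 - INR K / INR (S N)) * hyper_tail r N K j.
Proof.
  revert N K j; induction r as [|r IH]; intros N K j HrN; [simpl; ring|].
  destruct N as [|N]; [lia|].
  cbn [hyper_tail Nat.pred].
  rewrite (IH N (pred K) (pred j)), (IH N K j) by lia.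
  assert (HN : 0 < INR (S N)) by (apply lt_0_INR; lia).
  rewrite !S_INR in *.
  destruct K as [|K]; [simpl; field; lra|].
  cbn [Nat.pred]. rewrite S_INR. field. lra.
Qed.

Lemma hyper_tail_all r K j : (K <= r)%nat ->
  hyper_tail r r K j = if Nat.leb j K then 1 else 0.
Proof.
  revert K j; induction r as [|r IH]; intros K j HK.
  - replace K with 0%nat by lia. now destruct j.
  - cbn [hyper_tail Nat.pred].
    assert (HN : 0 < INR (S r)) by (apply lt_0_INR; lia).
    rewrite (IH (pred K)) by lia.
    destruct (Nat.eq_dec K (S r)) as [->|HK'].
    + replace (INR (S r) / INR (S r)) with 1 by (field; lra).
      destruct j as [|j]; cbn [Nat.pred Nat.leb]; [ring | destruct (j <=? r); ring].
    + rewrite (IH K) by lia.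
      destruct K as [|K]; [simpl; unfold Rdiv; ring|].
      destruct j as [|j]; cbn [Nat.pred Nat.leb]; [ring | destruct (j <=? K); ring].
Qed.

Lemma pclas_gt b w n k : (w + n < k)%nat -> pclas b w n k = 0.
Proof.
  revert k; induction n as [|n IH]; intros k Hk; simpl.
  - destruct (Nat.eqb_spec k w); [lia | reflexivity].
  - destruct k as [|k]; [lia|]. rewrite !IH by lia. lra.
Qed.

Lemma pclas_nonneg b w n k : (0 < b)%nat -> 0 <= pclas b w n k.
Proof.
  intro hb; revert k; induction n as [|n IH]; intro k; simpl.
  - destruct (Nat.eqb k w); lra.
  - assert (HT : 0 < INR (b + w + n)) by (apply lt_0_INR; lia).
    assert (Hstay : 0 <= pclas b w n k * (INR (b + w + n) - INR k) / INR (b + w + n)).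
    { destruct (le_lt_dec k (w + n)) as [Hk|Hk].
      - assert (INR k <= INR (b + w + n)) by (apply le_INR; lia).
        apply Rdiv_le_0_compat; [apply Rmult_le_pos; [apply IH | lra] | exact HT].
      - rewrite pclas_gt by lia. unfold Rdiv. lra. }
    destruct k as [|k]; [lra|].
    assert (0 <= pclas b w n k * INR k / INR (b + w + n)); [|lra].
    apply Rdiv_le_0_compat; [apply Rmult_le_pos; [apply IH | apply pos_INR] | exact HT].
Qed.

Definition pclas_cdf (b w n k : nat) : R := sum_f_R0 (pclas b w n) k.

Lemma pclas_cdf_O b w k : pclas_cdf b w 0 k = if Nat.leb w k then 1 else 0.
Proof.
  unfold pclas_cdf; induction k as [|k IH]; [now destruct w|].
  rewrite tech5, IH. cbn [pclas].
  destruct (Nat.eqb_spec (S k) w), (Nat.leb_spec w k), (Nat.leb_spec w (S k));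
    lia || lra.
Qed.

Lemma pclas_cdf_S b w n k : (0 < b + w + n)%nat ->
  pclas_cdf b w (S n) k = pclas_cdf b w n k - pclas b w n k * INR k / INR (b + w + n).
Proof.
  intro Hp. assert (HT : 0 < INR (b + w + n)) by (apply lt_0_INR; lia).
  unfold pclas_cdf; induction k as [|k IH]; [simpl; field; lra|].
  rewrite !tech5, IH. cbn [pclas]. rewrite S_INR. field. lra.
Qed.

Lemma pclas_cdf_total b w n k : (0 < b)%nat -> (w + n <= k)%nat -> pclas_cdf b w n k = 1.
Proof.
  intro hb; revert k; induction n as [|n IH]; intros k Hk.
  - rewrite pclas_cdf_O. destruct (Nat.leb_spec w k); [reflexivity | lia].
  - rewrite pclas_cdf_S, pclas_gt, IH by lia. lra.
Qed.

(* Both sides satisfy the recursion [pclas_cdf_S] / [hyper_tail_remove] in [n]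
   and agree at [n = 0] by [hyper_tail_all]. *)
Lemma pclas_cdf_hyper_tail b w n k : (0 < b)%nat -> (k <= w + b - 1 + n)%nat ->
  pclas_cdf b w n k = hyper_tail (w + b - 1) (w + b - 1 + n) k w.
Proof.
  intro hb; set (m := (w + b - 1)%nat). revert k; induction n as [|n IH]; intros k Hk.
  - rewrite pclas_cdf_O, Nat.add_0_r, hyper_tail_all by lia. reflexivity.
  - rewrite pclas_cdf_S by lia.
    replace (m + S n)%nat with (S (m + n)) by lia.
    rewrite hyper_tail_remove by lia.
    replace (INR (S (m + n))) with (INR (b + w + n)) by (f_equal; unfold m; lia).
    assert (HT : 0 < INR (b + w + n)) by (apply lt_0_INR; lia).
    destruct k as [|k]; [rewrite IH by lia; simpl; unfold Rdiv; ring|].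
    assert (Hp : pclas b w n (S k) = pclas_cdf b w n (S k) - pclas_cdf b w n k)
      by (unfold pclas_cdf; rewrite tech5; ring).
    cbn [Nat.pred]. rewrite <- (IH k) by lia.
    destruct (Nat.eq_dec (S k) (S (m + n))) as [Hmax|Hlt].
    + assert (Hz : pclas b w n (S k) = 0) by (apply pclas_gt; unfold m in *; lia).
      replace (INR (S k)) with (INR (b + w + n)) by (f_equal; unfold m in *; lia).
      unfold pclas_cdf at 1; rewrite tech5; fold (pclas_cdf b w n k).
      rewrite Hz. field. lra.
    + rewrite <- (IH (S k)), Hp by lia. field. lra.
Qed.

Lemma beta_cdf_le_inv a c x y : (0 < a)%nat -> (0 < c)%nat ->
  0 <= x <= 1 -> 0 <= y <= 1 -> beta_cdf a c x <= beta_cdf a c y -> x <= y.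
Proof.
  intros ha hc. apply (increasing_le_inv _ (beta_dens a c)).
  - intro t. now apply beta_cdf_derive.
  - apply beta_dens_pos.
Qed.

Lemma pclas_cdf_le_beta_cdf b w n k : (0 < b)%nat -> (k <= n)%nat ->
  pclas_cdf b w n k <= beta_cdf w b (INR k / INR (S n)).
Proof.
  intros hb hk. assert (HN : 0 < INR (S n)) by (apply lt_0_INR; lia).
  rewrite pclas_cdf_hyper_tail by (auto; lia). apply hyper_tail_le_binom_tail.
  - split; [apply Rdiv_le_0_compat; [apply pos_INR | exact HN]|].
    apply (Rdiv_le_1 _ _ HN), le_INR; lia.
  - right. field. lra.
Qed.

Lemma beta_cdf_le_pclas_cdf b w n k : (0 < b)%nat ->
  (w + b - 1 <= S k)%nat -> (k <= w + b - 1 + n)%nat ->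
  beta_cdf w b ((INR (S k) - INR (w + b - 1)) / INR (S n)) <= pclas_cdf b w n k.
Proof.
  intros hb hlo hhi. assert (HN : 0 < INR (S n)) by (apply lt_0_INR; lia).
  assert (Hlo : INR (w + b - 1) <= INR (S k)) by (apply le_INR, hlo).
  assert (Hhi : INR (S k) <= INR (w + b - 1) + INR (S n))
    by (rewrite <- plus_INR; apply le_INR; lia).
  rewrite pclas_cdf_hyper_tail by (auto; lia). apply binom_tail_le_hyper_tail; [|exact hhi|].
  - split; [apply Rdiv_le_0_compat; [lra | exact HN]|].
    apply (Rdiv_le_1 _ _ HN). lra.
  - rewrite S_INR. right. field. lra.
Qed.

Lemma pclas_beta_upper b w n k y : (0 < b)%nat -> (0 < w)%nat -> 0 <= y <= 1 ->
  beta_cdf w b y <= pclas_cdf b w n k -> INR n * y <= INR k.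
Proof.
  intros hb hw Hy HF.
  destruct (le_lt_dec n k) as [Hnk|Hkn].
  - apply le_INR in Hnk. pose proof (pos_INR n). nra.
  - assert (HN : 0 < INR (S n)) by (apply lt_0_INR; lia).
    assert (Hp : 0 <= INR k / INR (S n) <= 1).
    { split; [apply Rdiv_le_0_compat; [apply pos_INR | exact HN]|].
      apply (Rdiv_le_1 _ _ HN), le_INR; lia. }
    assert (Hyp : y <= INR k / INR (S n)).
    { apply (beta_cdf_le_inv w b); auto.
      eapply Rle_trans; [exact HF | apply pclas_cdf_le_beta_cdf; auto; lia]. }
    apply (Rle_div_r _ _ _ HN) in Hyp. rewrite S_INR in Hyp. lra.
Qed.

Lemma pclas_beta_lower b w n k y : (0 < b)%nat -> (0 < w)%nat -> (k <= w + n)%nat ->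
  0 <= y <= 1 -> mass_below (pclas b w n) k <= beta_cdf w b y ->
  INR k - INR (b + w) <= INR n * y.
Proof.
  intros hb hw hk Hy HF.
  assert (Hny : 0 <= INR n * y) by (apply Rmult_le_pos; [apply pos_INR | lra]).
  destruct (le_lt_dec k (b + w)) as [Hkbw|Hbwk]; [apply le_INR in Hkbw; lra|].
  destruct k as [|k]; [lia|].
  rewrite mass_below_S in HF.
  assert (HN : 0 < INR (S n)) by (apply lt_0_INR; lia).
  set (p := (INR (S k) - INR (w + b - 1)) / INR (S n)).
  assert (Hm : INR (w + b - 1) = INR (b + w) - 1)
    by (rewrite minus_INR, !plus_INR by lia; simpl; ring).
  assert (Hk1 : INR (S k) <= INR w + INR n) by (rewrite <- plus_INR; apply le_INR, hk).
  assert (Hk2 : INR b + INR w < INR (S k)) by (rewrite <- plus_INR; apply lt_INR, Hbwk).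
  assert (Hb1 : 1 <= INR b) by (apply (le_INR 1); lia).
  assert (Hp : 0 <= p <= 1).
  { unfold p; rewrite Hm, plus_INR. split.
    - apply Rdiv_le_0_compat; [lra | exact HN].
    - apply (Rdiv_le_1 _ _ HN). rewrite (S_INR n). lra. }
  assert (Hpy : p <= y).
  { apply (beta_cdf_le_inv w b); auto.
    eapply Rle_trans; [apply beta_cdf_le_pclas_cdf; auto; lia | exact HF]. }
  assert (Hpn : p * INR (S n) = INR (S k) - INR (b + w) + 1) by (unfold p; rewrite Hm; field; lra).
  rewrite (S_INR n) in Hpn. nra.
Qed.

Theorem lemma3p2 (b w n : nat) (hb : (0 < b)%nat) (hw : (0 < w)%nat) (hn : (0 < n)%nat) :
  pclas_beta_coupling_with_bound b w n (INR (b * (4 * w + b + 1)) / 2).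
Proof.
  destruct (quantile_coupling (beta_cdf w b) (beta_dens w b)
              (fun t => beta_cdf_derive w b t hw hb) (beta_dens_continuous w b)
              (beta_dens_nonneg w b) (beta_dens_pos w b) (beta_cdf_0 w b hw) (beta_cdf_1 w b hb)
              (pclas b w n) (w + n) (fun k => pclas_nonneg b w n k hb) (pclas_gt b w n)
              (pclas_cdf_total b w n (w + n) hb (le_n _)))
    as (g & Hg_nonneg & Hg_int & Hg_sum & Hg_loc).
  exists g. split; [exact Hg_nonneg | split; [|split; [exact Hg_sum|]]].
  - intros k _. apply Hg_int.
  - intros k y Hk Hy Hgk. destruct (Hg_loc k y Hgk) as [Hlo Hhi].
    pose proof (pclas_beta_upper b w n k y hb hw ltac:(lra) Hhi).
    pose proof (pclas_beta_lower b w n k y hb hw Hk ltac:(lra) Hlo).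
    assert (Hc : INR (b + w) < INR (b * (4 * w + b + 1)) / 2).
    { assert (H2 : (2 * (b + w) < b * (4 * w + b + 1))%nat) by nia.
      apply lt_INR in H2. rewrite mult_INR in H2. simpl (INR 2) in H2. lra. }
    pose proof (pos_INR (b + w)). apply Rabs_def1; lra.
Qed.
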